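(* Let $\mathcal X$ and $\mathcal Y$ be Banach spaces, let $A$ be a closed, densely defined linear operator from $\operatorname{dom}A\subset\mathcal X$ to $\mathcal Y$, and let $B$ be a closed, densely defined linear operator from $\operatorname{dom}B\subset\mathcal Y$ to $\mathcal X$. Assume $\rho(AB)\neq\emptyset$ and $\rho(BA)\neq\emptyset$. Then for every $\lambda\in\mathbb C\setminus\{0\}$: (i) $\operatorname{ran}(AB-\lambda)$ is closed if and only if $\operatorname{ran}(BA-\lambda)$ is closed; (ii) $\operatorname{ran}(AB-\lambda)$ is dense in $\mathcal Y$ if and only if $\operatorname{ran}(BA-\lambda)$ is dense in $\mathcal X$; (iii) $AB-\lambda$ is upper semi-Fredholm if and only if $BA-\lambda$ is upper semi-Fredholm; (iv) $AB-\lambda$ is lower semi-Fredholm if and only if $BA-\lambda$ is lower semi-Fredholm. Consequently, $\sigma_{ap}(AB)\setminus\{0\}=\sigma_{ap}(BA)\setminus\{0\}$, $\sigma_c(AB)\setminus\{0\}=\sigma_c(BA)\setminus\{0\}$, $\sigma_r(AB)\setminus\{0\}=\sigma_r(BA)\setminus\{0\}$, and $\sigma_{ess}(AB)\setminus\{0\}=\sigma_{ess}(BA)\setminus\{0\}$.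
   Context: Products have natural domains: $\operatorname{dom}(AB)=\{y\in\operatorname{dom}B: By\in\operatorname{dom}A\}$, $\operatorname{dom}(BA)=\{x\in\operatorname{dom}A: Ax\in\operatorname{dom}B\}$. For a linear operator $S$ in a Banach space $\mathcal Z$: $\rho(S)$ is the set of $\lambda\in\mathbb C$ with $S-\lambda:\operatorname{dom}S\to\mathcal Z$ bijective and $(S-\lambda)^{-1}$ bounded; $\sigma(S)=\mathbb C\setminus\rho(S)$. For closed densely defined $S$: the approximate point spectrum $\sigma_{ap}(S)$ is the set of $\lambda$ for which there is a sequence $(x_n)\subset\operatorname{dom}S$, $\|x_n\|=1$, $(S-\lambda)x_n\to0$; the continuous spectrum $\sigma_c(S)$ is the set of $\lambda\in\sigma(S)$ with $S-\lambda$ injective and $\operatorname{ran}(S-\lambda)$ dense; the residual spectrum $\sigma_r(S)$ is the set of $\lambda$ with $S-\lambda$ injective and $\operatorname{ran}(S-\lambda)$ not dense. $S$ is upper semi-Fredholm if $\operatorname{ran}S$ is closed and $\ker S$ is finite-dimensional; lower semi-Fredholm if $\operatorname{ran}S$ is (closed and) of finite codimension; Fredholm if both. $\sigma_{ess}(S)=\{\lambda\in\mathbb C: S-\lambda \text{ is not Fredholm}\}$. *)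

From Stdlib Require Import Reals List.
Open Scope R_scope.

Record Cplx := mkC { Re : R; Im : R }.
Definition C0 : Cplx := mkC 0 0.
Definition C1 : Cplx := mkC 1 0.
Definition Cadd (a b : Cplx) : Cplx := mkC (Re a + Re b) (Im a + Im b).
Definition Cmul (a b : Cplx) : Cplx :=
  mkC (Re a * Re b - Im a * Im b) (Re a * Im b + Im a * Re b).
Definition Copp (a : Cplx) : Cplx := mkC (- Re a) (- Im a).
Definition Cabs (a : Cplx) : R := sqrt (Re a * Re a + Im a * Im a).

Record Banach := {
  carrier :> Type;
  vzero : carrier;
  vadd : carrier -> carrier -> carrier;
  vopp : carrier -> carrier;
  vscal : Cplx -> carrier -> carrier;
  vnorm : carrier -> R;
  vadd_assoc : forall x y z, vadd x (vadd y z) = vadd (vadd x y) z;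
  vadd_comm : forall x y, vadd x y = vadd y x;
  vadd_0 : forall x, vadd x vzero = x;
  vadd_opp : forall x, vadd x (vopp x) = vzero;
  vscal_1 : forall x, vscal C1 x = x;
  vscal_assoc : forall a b x, vscal a (vscal b x) = vscal (Cmul a b) x;
  vscal_distr_v : forall a x y, vscal a (vadd x y) = vadd (vscal a x) (vscal a y);
  vscal_distr_s : forall a b x, vscal (Cadd a b) x = vadd (vscal a x) (vscal b x);
  vnorm_nonneg : forall x, 0 <= vnorm x;
  vnorm_eq0 : forall x, vnorm x = 0 -> x = vzero;
  vnorm_scal : forall a x, vnorm (vscal a x) = Cabs a * vnorm x;
  vnorm_triangle : forall x y, vnorm (vadd x y) <= vnorm x + vnorm y;
  vcomplete : forall u : nat -> carrier,
    (forall eps, eps > 0 -> exists N, forall n m, (n >= N)%nat -> (m >= N)%nat ->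
        vnorm (vadd (u n) (vopp (u m))) < eps) ->
    exists l, forall eps, eps > 0 -> exists N, forall n, (n >= N)%nat ->
        vnorm (vadd (u n) (vopp l)) < eps
}.

Arguments vzero {_}.
Arguments vadd {_} _ _.
Arguments vopp {_} _.
Arguments vscal {_} _ _.
Arguments vnorm {_} _.

Definition vsub {X : Banach} (x y : X) : X := vadd x (vopp y).

Definition converges {X : Banach} (u : nat -> X) (l : X) : Prop :=
  forall eps, eps > 0 -> exists N, forall n, (n >= N)%nat -> vnorm (vsub (u n) l) < eps.

Definition is_closed_set {X : Banach} (S : X -> Prop) : Prop :=
  forall (u : nat -> X) (l : X), (forall n, S (u n)) -> converges u l -> S l.
Definition is_dense_set {X : Banach} (S : X -> Prop) : Prop :=
  forall (x : X) eps, eps > 0 -> exists z, S z /\ vnorm (vsub x z) < eps.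

Definition lincomb {X : Banach} (l : list (Cplx * X)) : X :=
  fold_right (fun p acc => vadd (vscal (fst p) (snd p)) acc) vzero l.

Definition in_span {X : Banach} (vs : list X) (x : X) : Prop :=
  exists cs : list Cplx, length cs = length vs /\ x = lincomb (combine cs vs).

Record LinOp (X Y : Banach) := {
  dom : X -> Prop;
  app : X -> Y;
  dom_0 : dom vzero;
  dom_add : forall x y, dom x -> dom y -> dom (vadd x y);
  dom_scal : forall a x, dom x -> dom (vscal a x);
  app_add : forall x y, dom x -> dom y -> app (vadd x y) = vadd (app x) (app y);
  app_scal : forall a x, dom x -> app (vscal a x) = vscal a (app x)
}.
Arguments dom {X Y} _ _.
Arguments app {X Y} _ _.

Definition closed_op {X Y : Banach} (T : LinOp X Y) : Prop :=
  forall (u : nat -> X) (x : X) (y : Y), (forall n, dom T (u n)) ->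
    converges u x -> converges (fun n => app T (u n)) y -> dom T x /\ app T x = y.

Definition densely_defined {X Y : Banach} (T : LinOp X Y) : Prop :=
  is_dense_set (dom T).

Definition prod_dom {X Y Z : Banach} (T : LinOp Y Z) (S : LinOp X Y) (x : X) : Prop :=
  dom S x /\ dom T (app S x).
Definition prod_app {X Y Z : Banach} (T : LinOp Y Z) (S : LinOp X Y) (x : X) : Z :=
  app T (app S x).

(** We treat operators in a space Z through their domain and action, so that
    S - lambda is (dom S, x |-> S x - lambda x). *)
Definition ran_shift {Z : Banach} (D : Z -> Prop) (f : Z -> Z) (lam : Cplx) (y : Z) : Prop :=
  exists x, D x /\ vsub (f x) (vscal lam x) = y.
Definition ker_shift {Z : Banach} (D : Z -> Prop) (f : Z -> Z) (lam : Cplx) (x : Z) : Prop :=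
  D x /\ vsub (f x) (vscal lam x) = vzero.
Definition injective_shift {Z : Banach} (D : Z -> Prop) (f : Z -> Z) (lam : Cplx) : Prop :=
  forall x1 x2, D x1 -> D x2 ->
    vsub (f x1) (vscal lam x1) = vsub (f x2) (vscal lam x2) -> x1 = x2.

Definition in_resolvent {Z : Banach} (D : Z -> Prop) (f : Z -> Z) (lam : Cplx) : Prop :=
  injective_shift D f lam /\ (forall y, ran_shift D f lam y) /\
  exists c : R, forall x, D x -> vnorm x <= c * vnorm (vsub (f x) (vscal lam x)).
Definition in_spectrum {Z : Banach} (D : Z -> Prop) (f : Z -> Z) (lam : Cplx) : Prop :=
  ~ in_resolvent D f lam.

Definition finite_dim_set {Z : Banach} (K : Z -> Prop) : Prop :=
  exists vs : list Z, forall x, K x -> in_span vs x.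
Definition finite_codim_set {Z : Banach} (M : Z -> Prop) : Prop :=
  exists vs : list Z, forall y, exists m w, M m /\ in_span vs w /\ y = vadd m w.
Definition upper_semi_fredholm {Z : Banach} (D : Z -> Prop) (f : Z -> Z) (lam : Cplx) : Prop :=
  is_closed_set (ran_shift D f lam) /\ finite_dim_set (ker_shift D f lam).
Definition lower_semi_fredholm {Z : Banach} (D : Z -> Prop) (f : Z -> Z) (lam : Cplx) : Prop :=
  is_closed_set (ran_shift D f lam) /\ finite_codim_set (ran_shift D f lam).
Definition fredholm {Z : Banach} (D : Z -> Prop) (f : Z -> Z) (lam : Cplx) : Prop :=
  upper_semi_fredholm D f lam /\ lower_semi_fredholm D f lam.

Definition in_sigma_ap {Z : Banach} (D : Z -> Prop) (f : Z -> Z) (lam : Cplx) : Prop :=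
  exists u : nat -> Z, (forall n, D (u n)) /\ (forall n, vnorm (u n) = 1) /\
    converges (fun n => vsub (f (u n)) (vscal lam (u n))) vzero.
Definition in_sigma_c {Z : Banach} (D : Z -> Prop) (f : Z -> Z) (lam : Cplx) : Prop :=
  in_spectrum D f lam /\ injective_shift D f lam /\ is_dense_set (ran_shift D f lam).
Definition in_sigma_r {Z : Banach} (D : Z -> Prop) (f : Z -> Z) (lam : Cplx) : Prop :=
  injective_shift D f lam /\ ~ is_dense_set (ran_shift D f lam).
Definition in_sigma_ess {Z : Banach} (D : Z -> Prop) (f : Z -> Z) (lam : Cplx) : Prop :=
  ~ fredholm D f lam.

(* Fix resolvent points nu of BA and mu of AB, with R = (BA - nu)^-1 and
   Q = (AB - mu)^-1.  Since A is closed, the closed graph theorem makes A R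
   bounded, and likewise B Q.  For lam <> 0 the operators AB - lam and
   BA - lam are intertwined by A and B, and R commutes with BA - lam; together
   these give  x in ran (BA - lam)  iff  A R x in ran (AB - lam).  Closedness
   of the range then passes through the bounded map A R, density and finite
   codimension through B Q, finite dimension of the kernel through B, and
   lower bounds through norm estimates on A R and B Q.  Each part of the
   spectrum is a boolean combination of these properties. *)

From Stdlib Require Import Reals List Lra Lia ZArith Classical ClassicalEpsilon.
Open Scope R_scope.

Arguments vadd_assoc {_} _ _ _.
Arguments vadd_comm {_} _ _.
Arguments vadd_0 {_} _.
Arguments vadd_opp {_} _.
Arguments vscal_1 {_} _.
Arguments vscal_assoc {_} _ _ _.
Arguments vscal_distr_v {_} _ _ _.
Arguments vscal_distr_s {_} _ _ _.
Arguments vnorm_nonneg {_} _.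
Arguments vnorm_eq0 {_} _ _.
Arguments vnorm_scal {_} _ _.
Arguments vnorm_triangle {_} _ _.

Lemma Cplx_eq (a b : Cplx) : Re a = Re b -> Im a = Im b -> a = b.
Proof. destruct a, b; simpl; intros; subst; reflexivity. Qed.

Ltac Cring := apply Cplx_eq; simpl; ring.

Definition RtoC (t : R) : Cplx := mkC t 0.
Definition Cnorm2 (a : Cplx) : R := Re a * Re a + Im a * Im a.
Definition Cinv (a : Cplx) : Cplx := mkC (Re a / Cnorm2 a) (- Im a / Cnorm2 a).

Lemma Cnorm2_neq0 a : a <> C0 -> Re a * Re a + Im a * Im a <> 0.
Proof.
  intro H. destruct a as [x y]; simpl.
  destruct (Req_dec x 0); destruct (Req_dec y 0); subst; try nra.
  exfalso; apply H; reflexivity.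
Qed.

Lemma Cinv_r a : a <> C0 -> Cmul a (Cinv a) = C1.
Proof.
  intro H. pose proof (Cnorm2_neq0 a H). destruct a as [x y].
  unfold Cinv, Cnorm2 in *; simpl in *. apply Cplx_eq; simpl; field; lra.
Qed.

Lemma Cinv_l a : a <> C0 -> Cmul (Cinv a) a = C1.
Proof. intro H. rewrite <- (Cinv_r a H). Cring. Qed.

Lemma Cabs_nonneg a : 0 <= Cabs a.
Proof. apply sqrt_pos. Qed.

Lemma Cabs_RtoC t : Cabs (RtoC t) = Rabs t.
Proof.
  unfold Cabs, RtoC; simpl. replace (t * t + 0 * 0) with (Rsqr t) by (unfold Rsqr; ring).
  apply sqrt_Rsqr_abs.
Qed.

Lemma Cabs_C1 : Cabs C1 = 1.
Proof. change C1 with (RtoC 1). rewrite Cabs_RtoC. apply Rabs_R1. Qed.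

Lemma Cabs_opp a : Cabs (Copp a) = Cabs a.
Proof. destruct a; unfold Cabs; simpl; f_equal; ring. Qed.

Section VectorAlgebra.
Context {X : Banach}.
Implicit Types x y z : X.

Lemma vadd_0_l x : vadd vzero x = x.
Proof. rewrite vadd_comm; apply vadd_0. Qed.

Lemma vopp_l x : vadd (vopp x) x = vzero.
Proof. rewrite vadd_comm; apply vadd_opp. Qed.

Lemma vadd_cancel_l z x y : vadd z x = vadd z y -> x = y.
Proof.
  intro H. rewrite <- (vadd_0_l x), <- (vadd_0_l y), <- (vopp_l z), <- !vadd_assoc, H.
  reflexivity.
Qed.

Lemma vscal_C0 x : vscal C0 x = vzero.
Proof.
  apply (vadd_cancel_l (vscal C0 x)). rewrite vadd_0, <- vscal_distr_s. f_equal. Cring.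
Qed.

Lemma vscal_vzero a : vscal a (@vzero X) = vzero.
Proof.
  apply (vadd_cancel_l (vscal a vzero)). rewrite vadd_0, <- vscal_distr_v, vadd_0.
  reflexivity.
Qed.

Lemma vopp_unique x y : vadd x y = vzero -> y = vopp x.
Proof. intro H. apply (vadd_cancel_l x). rewrite H, vadd_opp. reflexivity. Qed.

Lemma vopp_scal x : vopp x = vscal (Copp C1) x.
Proof.
  symmetry. apply vopp_unique. rewrite <- (vscal_1 x) at 1. rewrite <- vscal_distr_s.
  replace (Cadd C1 (Copp C1)) with C0 by Cring. apply vscal_C0.
Qed.

Lemma vopp_vopp x : vopp (vopp x) = x.
Proof. symmetry. apply vopp_unique. apply vopp_l. Qed.

Lemma vopp_vadd x y : vopp (vadd x y) = vadd (vopp x) (vopp y).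
Proof. rewrite !vopp_scal. apply vscal_distr_v. Qed.

Lemma vopp_vzero : vopp (@vzero X) = vzero.
Proof. rewrite vopp_scal. apply vscal_vzero. Qed.

Lemma vscal_vopp a x : vscal a (vopp x) = vopp (vscal a x).
Proof. rewrite !vopp_scal, !vscal_assoc. f_equal. Cring. Qed.

Lemma vnorm_vzero : vnorm (@vzero X) = 0.
Proof.
  rewrite <- (vscal_C0 vzero), vnorm_scal. unfold Cabs, C0; simpl.
  replace (0 * 0 + 0 * 0) with 0 by ring. rewrite sqrt_0. ring.
Qed.

Lemma vnorm_vopp x : vnorm (vopp x) = vnorm x.
Proof. rewrite vopp_scal, vnorm_scal, Cabs_opp, Cabs_C1. ring. Qed.

Lemma vsub_diag x : vsub x x = vzero.
Proof. apply vadd_opp. Qed.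

Lemma vsub_vzero x : vsub x vzero = x.
Proof. unfold vsub. rewrite vopp_vzero, vadd_0. reflexivity. Qed.

Lemma vsub_eq0 x y : vsub x y = vzero -> x = y.
Proof.
  unfold vsub. intro H. pose proof (vopp_unique _ _ H) as E.
  rewrite <- (vopp_vopp y), E, vopp_vopp. reflexivity.
Qed.

Lemma vsub_vadd x y : vadd (vsub x y) y = x.
Proof. unfold vsub. rewrite <- vadd_assoc, vopp_l, vadd_0. reflexivity. Qed.

Lemma vsub_vadd_vadd x y u v : vsub (vadd x u) (vadd y v) = vadd (vsub x y) (vsub u v).
Proof.
  unfold vsub. rewrite vopp_vadd, !vadd_assoc. f_equal.
  rewrite <- !vadd_assoc. f_equal. apply vadd_comm.
Qed.

Lemma vscal_vsub a x y : vscal a (vsub x y) = vsub (vscal a x) (vscal a y).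
Proof. unfold vsub. rewrite vscal_distr_v, vscal_vopp. reflexivity. Qed.

Lemma vscal_Cinv_l a x : a <> C0 -> vscal (Cinv a) (vscal a x) = x.
Proof. intro H. rewrite vscal_assoc, Cinv_l by auto. apply vscal_1. Qed.

Lemma vnorm_vsub_sym x y : vnorm (vsub x y) = vnorm (vsub y x).
Proof.
  unfold vsub. rewrite <- vnorm_vopp, vopp_vadd, vopp_vopp, vadd_comm. reflexivity.
Qed.

Lemma vnorm_vsub_triangle x y z : vnorm (vsub x z) <= vnorm (vsub x y) + vnorm (vsub y z).
Proof.
  replace (vsub x z) with (vadd (vsub x y) (vsub y z)). apply vnorm_triangle.
  unfold vsub. rewrite <- vadd_assoc. f_equal. rewrite vadd_assoc, vopp_l, vadd_0_l.
  reflexivity.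
Qed.

Lemma vnorm_vsub_le x y : vnorm (vsub x y) <= vnorm x + vnorm y.
Proof. unfold vsub. rewrite <- (vnorm_vopp y). apply vnorm_triangle. Qed.

Lemma vnorm_reverse_triangle x y : vnorm x - vnorm y <= vnorm (vsub x y).
Proof. pose proof (vnorm_triangle (vsub x y) y) as H. rewrite vsub_vadd in H. lra. Qed.

End VectorAlgebra.

(** * A normalisation tactic for vector identities *)

(* A term denotes the linear combination of its atoms with coefficients
   [vterm_coef]; two terms with equal coefficients (compared by [ring]/[field]
   on real and imaginary parts) denote the same vector. *)
Inductive vterm :=
  | VAtom (n : nat) | VZero | VAdd (a b : vterm) | VOpp (a : vterm)
  | VSub (a b : vterm) | VScal (c : Cplx) (a : vterm).

Fixpoint vterm_eval {X : Banach} (env : list X) (e : vterm) : X :=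
  match e with
  | VAtom n => nth n env vzero
  | VZero => vzero
  | VAdd a b => vadd (vterm_eval env a) (vterm_eval env b)
  | VOpp a => vopp (vterm_eval env a)
  | VSub a b => vsub (vterm_eval env a) (vterm_eval env b)
  | VScal c a => vscal c (vterm_eval env a)
  end.

Fixpoint vterm_coef (e : vterm) (i : nat) : Cplx :=
  match e with
  | VAtom n => if Nat.eqb n i then C1 else C0
  | VZero => C0
  | VAdd a b => Cadd (vterm_coef a i) (vterm_coef b i)
  | VOpp a => Copp (vterm_coef a i)
  | VSub a b => Cadd (vterm_coef a i) (Copp (vterm_coef b i))
  | VScal c a => Cmul c (vterm_coef a i)
  end.

Fixpoint vcomb {X : Banach} (env : list X) (f : nat -> Cplx) (N : nat) : X :=
  match N with
  | O => vzero
  | S N => vadd (vcomb env f N) (vscal (f N) (nth N env vzero))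
  end.

Section VectorNormalisation.
Context {X : Banach}.
Implicit Types env : list X.

Lemma vcomb_add env f g N :
  vcomb env (fun i => Cadd (f i) (g i)) N = vadd (vcomb env f N) (vcomb env g N).
Proof.
  induction N; simpl. { rewrite vadd_0; auto. }
  rewrite IHN, vscal_distr_s, <- !vadd_assoc. f_equal.
  rewrite !vadd_assoc. f_equal. apply vadd_comm.
Qed.

Lemma vcomb_scal env c f N : vcomb env (fun i => Cmul c (f i)) N = vscal c (vcomb env f N).
Proof.
  induction N; simpl. { rewrite vscal_vzero; auto. }
  rewrite IHN, vscal_distr_v, vscal_assoc. auto.
Qed.

Lemma vcomb_opp env f N : vcomb env (fun i => Copp (f i)) N = vopp (vcomb env f N).
Proof.
  rewrite vopp_scal, <- vcomb_scal. induction N; simpl; auto.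
  rewrite IHN. do 2 f_equal. Cring.
Qed.

Lemma vcomb_zero env N : vcomb env (fun _ => C0) N = vzero.
Proof. induction N; simpl; auto. rewrite IHN, vscal_C0, vadd_0; auto. Qed.

Lemma vcomb_ext env f g N :
  (forall i, (i < N)%nat -> f i = g i) -> vcomb env f N = vcomb env g N.
Proof. induction N; simpl; intros; auto. rewrite IHN, H; auto. Qed.

Lemma vcomb_atom env n N :
  vcomb env (fun i => if Nat.eqb n i then C1 else C0) N =
  if Nat.ltb n N then nth n env vzero else vzero.
Proof.
  induction N; simpl; auto. rewrite IHN.
  destruct (Nat.eqb n N) eqn:E.
  - apply Nat.eqb_eq in E; subst. rewrite Nat.ltb_irrefl.
    replace (N <? S N)%nat with true by (symmetry; apply Nat.ltb_lt; lia).
    rewrite vscal_1, vadd_0_l; auto.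
  - rewrite vscal_C0, vadd_0. apply Nat.eqb_neq in E.
    destruct (Nat.ltb n N) eqn:E2; destruct (Nat.ltb n (S N)) eqn:E3; auto;
      apply Nat.ltb_lt in E2 || apply Nat.ltb_nlt in E2;
      apply Nat.ltb_lt in E3 || apply Nat.ltb_nlt in E3; lia.
Qed.

Lemma vterm_eval_vcomb env e : vterm_eval env e = vcomb env (vterm_coef e) (length env).
Proof.
  induction e; simpl.
  - rewrite vcomb_atom. destruct (Nat.ltb n (length env)) eqn:E; auto.
    apply Nat.ltb_nlt in E. apply nth_overflow. lia.
  - symmetry; apply vcomb_zero.
  - rewrite vcomb_add, IHe1, IHe2; auto.
  - rewrite vcomb_opp, IHe; auto.
  - rewrite vcomb_add, vcomb_opp, IHe1, IHe2; auto.
  - rewrite vcomb_scal, IHe; auto.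
Qed.

Lemma vterm_eval_eq env e1 e2 :
  (forall i, (i < length env)%nat -> vterm_coef e1 i = vterm_coef e2 i) ->
  vterm_eval env e1 = vterm_eval env e2.
Proof. intros. rewrite !vterm_eval_vcomb. apply vcomb_ext; auto. Qed.

End VectorNormalisation.

Ltac list_index t l :=
  lazymatch l with
  | t :: _ => constr:(0%nat)
  | _ :: ?l' => let n := list_index t l' in constr:(S n)
  end.

Ltac mem_atom t l :=
  lazymatch l with
  | @nil _ => constr:(false)
  | t :: _ => constr:(true)
  | _ :: ?l' => mem_atom t l'
  end.

Ltac snoc l t :=
  lazymatch l with
  | @nil ?T => constr:(@cons T t (@nil T))
  | ?h :: ?l' => let r := snoc l' t in constr:(h :: r)
  end.

Ltac add_atom t env :=
  let b := mem_atom t env in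
  lazymatch b with
  | true => env
  | false => snoc env t
  end.

Ltac reify env t :=
  lazymatch t with
  | vzero => constr:((VZero, env))
  | vadd ?a ?b =>
      let r1 := reify env a in lazymatch r1 with (?e1, ?env1) =>
      let r2 := reify env1 b in lazymatch r2 with (?e2, ?env2) =>
        constr:((VAdd e1 e2, env2)) end end
  | vsub ?a ?b =>
      let r1 := reify env a in lazymatch r1 with (?e1, ?env1) =>
      let r2 := reify env1 b in lazymatch r2 with (?e2, ?env2) =>
        constr:((VSub e1 e2, env2)) end end
  | vopp ?a =>
      let r1 := reify env a in lazymatch r1 with (?e1, ?env1) => constr:((VOpp e1, env1)) end
  | vscal ?c ?a =>
      let r1 := reify env a in lazymatch r1 with (?e1, ?env1) => constr:((VScal c e1, env1)) end
  | _ => let env' := add_atom t env in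
         let n := list_index t env' in constr:((VAtom n, env'))
  end.

(* Nonzero denominators for [field] are taken from hypotheses [_ <> 0]. *)
Ltac Cfield :=
  apply Cplx_eq; cbv [Cinv Cnorm2 Cadd Cmul Copp C1 C0 RtoC Re Im]; field;
  repeat match goal with H : _ <> 0 |- _ => revert H end; auto.

Ltac vring :=
  lazymatch goal with
  | |- @eq (carrier ?X) ?l ?r =>
    let r1 := reify (@nil (carrier X)) l in lazymatch r1 with (?e1, ?env1) =>
    let r2 := reify env1 r in lazymatch r2 with (?e2, ?env2) =>
      change (vterm_eval env2 e1 = vterm_eval env2 e2); apply vterm_eval_eq; simpl length;
      let i := fresh "i" in let Hi := fresh "Hi" in intros i Hi;
      repeat (first [exfalso; lia
                    | destruct i as [|i]; [simpl; try solve [Cring]; try solve [Cfield] | ]])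
    end end
  end.

Section Convergence.
Context {X : Banach}.
Implicit Types u v : nat -> X.

Lemma converges_const (l : X) : converges (fun _ => l) l.
Proof. intros e He. exists 0%nat. intros. rewrite vsub_diag, vnorm_vzero. lra. Qed.

Lemma converges_ext u v a : (forall n, u n = v n) -> converges u a -> converges v a.
Proof. intros E H e He. destruct (H e He) as [N HN]. exists N; intros; rewrite <- E; auto. Qed.

Lemma converges_vadd u v a b : converges u a -> converges v b ->
  converges (fun n => vadd (u n) (v n)) (vadd a b).
Proof.
  intros Hu Hv e He. destruct (Hu (e/2)) as [N1 H1]; try lra.
  destruct (Hv (e/2)) as [N2 H2]; try lra.
  exists (N1 + N2)%nat. intros n Hn. rewrite vsub_vadd_vadd.
  pose proof (vnorm_triangle (vsub (u n) a) (vsub (v n) b)).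
  specialize (H1 n ltac:(lia)). specialize (H2 n ltac:(lia)). lra.
Qed.

Lemma converges_vscal u a c : converges u a -> converges (fun n => vscal c (u n)) (vscal c a).
Proof.
  intros Hu e He. pose proof (Cabs_nonneg c).
  destruct (Hu (e / (Cabs c + 1))) as [N H1]. { apply Rdiv_lt_0_compat; lra. }
  exists N. intros n Hn. rewrite <- vscal_vsub, vnorm_scal. specialize (H1 n Hn).
  pose proof (vnorm_nonneg (vsub (u n) a)).
  apply Rle_lt_trans with ((Cabs c + 1) * vnorm (vsub (u n) a)). { nra. }
  replace e with ((Cabs c + 1) * (e / (Cabs c + 1))) by (field; lra).
  apply Rmult_lt_compat_l; lra.
Qed.

Lemma converges_vsub u v a b : converges u a -> converges v b ->
  converges (fun n => vsub (u n) (v n)) (vsub a b).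
Proof.
  intros Hu Hv. unfold vsub. apply converges_vadd; auto. rewrite vopp_scal.
  apply (converges_ext (fun n => vscal (Copp C1) (v n))).
  { intro; symmetry; apply vopp_scal. }
  apply converges_vscal; auto.
Qed.

Lemma converges_vzero_iff u : converges u vzero <->
  (forall e, e > 0 -> exists N, forall n, (n >= N)%nat -> vnorm (u n) < e).
Proof.
  unfold converges. split; intros H e He; destruct (H e He) as [N HN]; exists N;
    intros n Hn; specialize (HN n Hn); rewrite vsub_vzero in *; auto.
Qed.

Lemma converges_vnorm_le u a M N0 : converges u a ->
  (forall n, (n >= N0)%nat -> vnorm (u n) <= M) -> vnorm a <= M.
Proof.
  intros H HM. apply Rnot_lt_le. intro C.
  destruct (H (vnorm a - M)) as [N HN]; try lra.
  specialize (HN (N + N0)%nat ltac:(lia)). specialize (HM (N + N0)%nat ltac:(lia)).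
  pose proof (vnorm_reverse_triangle a (u (N + N0)%nat)).
  rewrite vnorm_vsub_sym in H0. lra.
Qed.

End Convergence.

Lemma nat_archimedean (x : R) : exists n : nat, x < INR n.
Proof.
  destruct (archimed (Rabs x)) as [H1 H2]. exists (Z.to_nat (up (Rabs x))).
  rewrite INR_IZR_INZ, Z2Nat.id. { pose proof (Rle_abs x); lra. }
  apply le_IZR. pose proof (Rabs_pos x). lra.
Qed.

Lemma half_pow_small (e : R) : e > 0 -> exists N, forall n, (n >= N)%nat -> (1/2)^n < e.
Proof.
  intro He. destruct (pow_lt_1_zero (1/2)) with (y := e) as [N HN].
  { rewrite Rabs_pos_eq; lra. } { lra. }
  exists N. intros n Hn. specialize (HN n Hn). rewrite Rabs_pos_eq in HN; auto.
  apply pow_le; lra.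
Qed.

Lemma half_pow_pos k : 0 < (1/2)^k.
Proof. apply pow_lt; lra. Qed.

(** * Bounded linear maps and the closed graph theorem *)

Definition linear_map {X Y : Banach} (F : X -> Y) : Prop :=
  (forall x y, F (vadd x y) = vadd (F x) (F y)) /\ (forall a x, F (vscal a x) = vscal a (F x)).

Definition bounded_map {X Y : Banach} (F : X -> Y) : Prop :=
  exists c, 0 <= c /\ forall x, vnorm (F x) <= c * vnorm x.

Section LinearMap.
Context {X Y : Banach} (F : X -> Y).
Hypothesis HF : linear_map F.

Lemma linear_map_vzero : F vzero = vzero.
Proof. rewrite <- (vscal_C0 vzero), (proj2 HF), !vscal_C0. reflexivity. Qed.

Lemma linear_map_vsub x y : F (vsub x y) = vsub (F x) (F y).
Proof. unfold vsub. rewrite (proj1 HF), !vopp_scal, (proj2 HF). reflexivity. Qed.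

Lemma bounded_linear_continuous (u : nat -> X) a : bounded_map F ->
  converges u a -> converges (fun n => F (u n)) (F a).
Proof.
  intros [C [HC0 HC]] H e He.
  destruct (H (e / (C + 1))) as [N HN]. { apply Rdiv_lt_0_compat; lra. }
  exists N. intros n Hn. rewrite <- linear_map_vsub. specialize (HN n Hn).
  specialize (HC (vsub (u n) a)). pose proof (vnorm_nonneg (vsub (u n) a)).
  apply Rle_lt_trans with ((C + 1) * vnorm (vsub (u n) a)). { nra. }
  replace e with ((C + 1) * (e / (C + 1))) by (field; lra).
  apply Rmult_lt_compat_l; lra.
Qed.

End LinearMap.

Lemma nested_balls_common_point {X : Banach} (c : nat -> X) (r : nat -> R) :
  (forall k, 0 < r k) -> (forall k, r k <= (1/2)^k) ->
  (forall k, vnorm (vsub (c (S k)) (c k)) + r (S k) <= r k) ->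
  exists l, forall k, vnorm (vsub l (c k)) <= r k.
Proof.
  intros Hpos Hsmall Hstep.
  assert (Hnest : forall j k, vnorm (vsub (c (j + k)%nat) (c k)) + r (j + k)%nat <= r k).
  { induction j; intro k; simpl. { rewrite vsub_diag, vnorm_vzero. lra. }
    specialize (IHj k). specialize (Hstep (j + k)%nat).
    pose proof (vnorm_vsub_triangle (c (S (j + k))) (c (j + k)%nat) (c k)). lra. }
  assert (Hle : forall m k, (m >= k)%nat -> vnorm (vsub (c m) (c k)) <= r k).
  { intros m k Hmk. replace m with ((m - k) + k)%nat by lia.
    specialize (Hnest (m - k)%nat k). specialize (Hpos ((m - k) + k)%nat). lra. }
  destruct (vcomplete _ c) as [l Hl].
  { intros e He. destruct (half_pow_small (e/2)) as [N HN]; [lra|]. exists N. intros n m Hn Hm.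
    change (vnorm (vsub (c n) (c m)) < e).
    pose proof (vnorm_vsub_triangle (c n) (c N) (c m)).
    rewrite (vnorm_vsub_sym (c N) (c m)) in H.
    pose proof (Hle n N Hn). pose proof (Hle m N Hm).
    specialize (Hsmall N). specialize (HN N (le_n _)). lra. }
  exists l. intro k. apply (converges_vnorm_le (fun m => vsub (c m) (c k)) _ _ k).
  - apply converges_vsub; [exact Hl | apply converges_const].
  - intros m Hm. apply Hle; lia.
Qed.

Fixpoint partial_sum {X : Banach} (z : nat -> X) (k : nat) : X :=
  match k with O => vzero | S k => vadd (partial_sum z k) (z k) end.

Lemma geometric_series_converges {X : Banach} (w : nat -> X) C : 0 <= C ->
  (forall k, vnorm (w k) <= C * (1/2)^k) ->
  exists y, converges (partial_sum w) y /\ vnorm y <= 2 * C.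
Proof.
  intros HC Hw.
  assert (Htail : forall j k, vnorm (vsub (partial_sum w (j + k)) (partial_sum w k))
                              <= 2 * C * ((1/2)^k - (1/2)^(j + k))).
  { induction j; intro k. { simpl. rewrite vsub_diag, vnorm_vzero. lra. }
    change (partial_sum w (S j + k)) with (vadd (partial_sum w (j + k)) (w (j + k)%nat)).
    replace (vsub (vadd (partial_sum w (j + k)) (w (j + k)%nat)) (partial_sum w k))
      with (vadd (vsub (partial_sum w (j + k)) (partial_sum w k)) (w (j + k)%nat)) by vring.
    eapply Rle_trans; [apply vnorm_triangle|].
    specialize (IHj k). specialize (Hw (j + k)%nat).
    change ((1/2)^(S j + k)) with (1/2 * (1/2)^(j + k)). lra. }
  assert (Hbound : forall m k, (m >= k)%nat ->
            vnorm (vsub (partial_sum w m) (partial_sum w k)) <= 2 * C * (1/2)^k).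
  { intros m k Hmk. replace m with ((m - k) + k)%nat by lia. pose proof (Htail (m - k)%nat k).
    pose proof (half_pow_pos (m - k + k)). nra. }
  destruct (vcomplete _ (partial_sum w)) as [y Hy].
  { intros e He. destruct (half_pow_small (e / (4 * C + 1))) as [N HN].
    { apply Rdiv_lt_0_compat; lra. }
    exists N. intros n m Hn Hm. change (vnorm (vsub (partial_sum w n) (partial_sum w m)) < e).
    pose proof (vnorm_vsub_triangle (partial_sum w n) (partial_sum w N) (partial_sum w m)).
    rewrite (vnorm_vsub_sym (partial_sum w N)) in H.
    pose proof (Hbound n N Hn). pose proof (Hbound m N Hm).
    specialize (HN N (le_n _)). pose proof (half_pow_pos N).
    assert ((1/2)^N * (4 * C + 1) < e).
    { replace e with (e / (4 * C + 1) * (4 * C + 1)) by (field; lra).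
      apply Rmult_lt_compat_r; lra. }
    nra. }
  exists y. split; [exact Hy|].
  apply (converges_vnorm_le _ _ _ 0 Hy). intros k _.
  pose proof (Htail k 0%nat) as H0. rewrite Nat.add_0_r in H0. simpl in H0.
  rewrite vsub_vzero in H0. pose proof (half_pow_pos k). nra.
Qed.

Section ClosedGraph.
Context {X Y : Banach} (F : X -> Y).

(* Baire: [X] is the union of the sets [{x | vnorm (F x) <= n}], so one of
   their closures contains a ball.  A failure at every level yields nested
   balls whose common point has [vnorm (F l) > n] for every [n]. *)
Lemma sublevel_dense_in_ball :
  exists (n : nat) (x0 : X) (r : R), r > 0 /\ forall x, vnorm (vsub x x0) < r ->
    forall d, d > 0 -> exists z, vnorm (vsub z x) < d /\ vnorm (F z) <= INR n.
Proof.
  apply NNPP. intro H.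
  assert (Hstep : forall (n : nat) (p : X * R), exists q : X * R, snd p > 0 ->
     snd q > 0 /\ snd q <= snd p / 2 /\ vnorm (vsub (fst q) (fst p)) + snd q <= snd p /\
     forall z, vnorm (vsub z (fst q)) <= snd q -> vnorm (F z) > INR n).
  { intros n [x0 r]. simpl. destruct (classic (r > 0)) as [Hr|Hr].
    2: { exists (x0, r). intro; contradiction. }
    assert (Hfar : exists x d, vnorm (vsub x x0) < r / 2 /\ d > 0 /\
                     forall z, vnorm (vsub z x) < d -> vnorm (F z) > INR n).
    { apply NNPP. intro H1. apply H. exists n, x0, (r / 2). split; [lra|].
      intros x Hx d Hd. apply NNPP. intro H2. apply H1. exists x, d.
      do 2 (split; auto). intros z Hz. apply Rnot_le_gt. intro H3. apply H2. eauto. }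
    destruct Hfar as [x [d [H1 [H2 H3]]]].
    exists (x, Rmin (d/2) (r/4)). simpl. intros _.
    pose proof (Rmin_l (d/2) (r/4)). pose proof (Rmin_r (d/2) (r/4)).
    assert (Rmin (d/2) (r/4) > 0) by (apply Rmin_glb_lt; lra).
    repeat split; try lra. intros z Hz. apply H3. lra. }
  assert (Hstep' : forall n, exists s : X * R -> X * R, forall p, snd p > 0 ->
     snd (s p) > 0 /\ snd (s p) <= snd p / 2 /\
     vnorm (vsub (fst (s p)) (fst p)) + snd (s p) <= snd p /\
     forall z, vnorm (vsub z (fst (s p))) <= snd (s p) -> vnorm (F z) > INR n)
    by (intro n; exact (choice _ (Hstep n))).
  destruct (choice _ Hstep') as [stp Hstp].
  set (sq := fix sq (k : nat) : X * R := match k with O => (vzero, 1) | S k => stp k (sq k) end).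
  assert (Hpos : forall k, snd (sq k) > 0).
  { induction k. { simpl; lra. } apply (Hstp k (sq k) IHk). }
  destruct (nested_balls_common_point (fun k => fst (sq k)) (fun k => snd (sq k))) as [l Hl].
  - exact Hpos.
  - induction k. { simpl; lra. }
    destruct (Hstp k (sq k) (Hpos k)) as [_ [H2 _]]. simpl. fold sq. lra.
  - intro k. apply (Hstp k (sq k) (Hpos k)).
  - destruct (nat_archimedean (vnorm (F l))) as [k Hk].
    destruct (Hstp k (sq k) (Hpos k)) as [_ [_ [_ H4]]].
    specialize (H4 l (Hl (S k))). lra.
Qed.

Hypothesis HF : linear_map F.

Lemma linear_sublevel_dense : exists M, 0 <= M /\
  forall h d, d > 0 -> exists z, vnorm (vsub z h) < d /\ vnorm (F z) <= M * vnorm h.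
Proof.
  destruct sublevel_dense_in_ball as [n [x0 [r [Hr HE]]]].
  assert (Hball : forall h, vnorm h < r -> forall d, d > 0 ->
            exists z, vnorm (vsub z h) < d /\ vnorm (F z) <= 2 * INR n).
  { intros h Hh d Hd.
    destruct (HE (vadd x0 h)) with (d := d/2) as [z1 [H1 H2]].
    { replace (vsub (vadd x0 h) x0) with h by vring. auto. } { lra. }
    destruct (HE x0) with (d := d/2) as [z2 [H3 H4]].
    { rewrite vsub_diag, vnorm_vzero; auto. } { lra. }
    exists (vsub z1 z2). split.
    - replace (vsub (vsub z1 z2) h) with (vsub (vsub z1 (vadd x0 h)) (vsub z2 x0)) by vring.
      pose proof (vnorm_vsub_le (vsub z1 (vadd x0 h)) (vsub z2 x0)). lra.
    - rewrite (linear_map_vsub F HF). pose proof (vnorm_vsub_le (F z1) (F z2)). lra. }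
  exists (4 * INR n / r). split.
  { pose proof (pos_INR n). apply Rmult_le_pos; [lra|]. left; apply Rinv_0_lt_compat; lra. }
  intros h d Hd. destruct (Req_dec (vnorm h) 0) as [E|E].
  { apply vnorm_eq0 in E. subst h. exists vzero.
    rewrite vsub_diag, vnorm_vzero, (linear_map_vzero F HF), vnorm_vzero. split; lra. }
  (* rescale [h] into the ball of radius [r] *)
  pose proof (vnorm_nonneg h). set (nh := vnorm h) in *.
  set (t := r / (2 * nh)). assert (Ht : t > 0) by (unfold t; apply Rdiv_lt_0_compat; lra).
  destruct (Hball (vscal (RtoC t) h)) with (d := t * d) as [z' [H1 H2]].
  { rewrite vnorm_scal, Cabs_RtoC, Rabs_pos_eq by lra. fold nh. unfold t. field_simplify; lra. }
  { apply Rmult_lt_0_compat; lra. }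
  assert (Hti : 0 <= / t) by (left; apply Rinv_0_lt_compat; auto).
  assert (Ht0 : t <> 0) by lra.
  exists (vscal (RtoC (/ t)) z'). split.
  - replace (vsub (vscal (RtoC (/ t)) z') h)
      with (vscal (RtoC (/ t)) (vsub z' (vscal (RtoC t) h))) by vring.
    rewrite vnorm_scal, Cabs_RtoC, Rabs_pos_eq by auto.
    apply Rmult_lt_reg_l with t; auto. field_simplify; lra.
  - rewrite (proj2 HF), vnorm_scal, Cabs_RtoC, Rabs_pos_eq by auto.
    apply Rle_trans with (/ t * (2 * INR n)). { apply Rmult_le_compat_l; auto. }
    unfold t. right. fold nh. field. lra.
Qed.

(* Approximating the successive remainders gives [x] as a series whose terms
   have geometrically decreasing images. *)
Lemma geometric_decomposition M :
  (forall h d, d > 0 -> exists z, vnorm (vsub z h) < d /\ vnorm (F z) <= M * vnorm h) ->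
  0 <= M -> forall x, exists z : nat -> X, forall k,
    vnorm (vsub x (partial_sum z k)) <= vnorm x * (1/2)^k /\
    vnorm (F (z k)) <= M * vnorm x * (1/2)^k.
Proof.
  intros Happ HM x. destruct (Req_dec (vnorm x) 0) as [E|Hnx].
  { exists (fun _ => vzero). intro k. apply vnorm_eq0 in E. subst x.
    replace (partial_sum _ k) with (@vzero X)
      by (induction k; simpl; [reflexivity | rewrite <- IHk; symmetry; apply vadd_0]).
    rewrite vsub_diag, (linear_map_vzero F HF), !vnorm_vzero. lra. }
  pose proof (vnorm_nonneg x) as Hx0. set (nx := vnorm x) in *.
  assert (Hg : forall p : X * R, exists z, snd p > 0 ->
            vnorm (vsub z (fst p)) < snd p /\ vnorm (F z) <= M * vnorm (fst p)).
  { intros [h d]. simpl. destruct (classic (d > 0)) as [Hd|Hd].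
    - destruct (Happ h d Hd) as [z Hz]. eauto.
    - exists vzero; intro; contradiction. }
  destruct (choice _ Hg) as [g Hgs].
  set (rem := fix rem (k : nat) : X :=
         match k with O => x | S k => vsub (rem k) (g (rem k, nx * (1/2)^(S k))) end).
  set (z := fun k => g (rem k, nx * (1/2)^(S k))).
  assert (Hrem : forall k, vsub x (partial_sum z k) = rem k).
  { induction k. { apply vsub_vzero. }
    change (vsub x (vadd (partial_sum z k) (z k)) = vsub (rem k) (z k)).
    rewrite <- IHk. vring. }
  assert (Hsize : forall k, vnorm (rem k) <= nx * (1/2)^k).
  { induction k. { simpl. unfold nx. lra. }
    assert (Hd : nx * (1/2)^(S k) > 0) by (pose proof (half_pow_pos (S k)); nra).
    destruct (Hgs (rem k, _) Hd) as [H1 _]. simpl in H1 |- *. rewrite vnorm_vsub_sym. lra. }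
  exists z. intro k. rewrite Hrem. split; [apply Hsize|].
  assert (Hd : nx * (1/2)^(S k) > 0) by (pose proof (half_pow_pos (S k)); nra).
  destruct (Hgs (rem k, _) Hd) as [_ H2]. simpl in H2.
  apply Rle_trans with (M * vnorm (rem k)); auto.
  rewrite Rmult_assoc. apply Rmult_le_compat_l; auto.
Qed.

Lemma linear_map_partial_sum (z : nat -> X) k :
  F (partial_sum z k) = partial_sum (fun i => F (z i)) k.
Proof.
  induction k; simpl. { apply (linear_map_vzero F HF). }
  rewrite (proj1 HF), IHk. reflexivity.
Qed.

Hypothesis Hclosed :
  forall u x y, converges u x -> converges (fun n => F (u n)) y -> F x = y.

Lemma bound_of_decomposition M x (z : nat -> X) : 0 <= M ->
  (forall k, vnorm (vsub x (partial_sum z k)) <= vnorm x * (1/2)^k /\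
             vnorm (F (z k)) <= M * vnorm x * (1/2)^k) ->
  vnorm (F x) <= 2 * M * vnorm x.
Proof.
  intros HM Hz. pose proof (vnorm_nonneg x).
  destruct (geometric_series_converges (fun k => F (z k)) (M * vnorm x)) as [y [Hy Hyn]].
  { apply Rmult_le_pos; lra. } { intro k. apply Hz. }
  assert (Hsum : converges (partial_sum z) x).
  { intros e He. destruct (half_pow_small (e / (vnorm x + 1))) as [N HN].
    { apply Rdiv_lt_0_compat; lra. }
    exists N. intros k Hk. rewrite vnorm_vsub_sym. destruct (Hz k) as [H1 _].
    specialize (HN k Hk). pose proof (half_pow_pos k).
    apply Rle_lt_trans with ((vnorm x + 1) * (1/2)^k). { nra. }
    replace e with ((vnorm x + 1) * (e / (vnorm x + 1))) by (field; lra).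
    apply Rmult_lt_compat_l; lra. }
  assert (HFsum : converges (fun k => F (partial_sum z k)) y).
  { apply (converges_ext (partial_sum (fun k => F (z k)))); auto.
    intro k. symmetry. apply linear_map_partial_sum. }
  rewrite (Hclosed _ _ _ Hsum HFsum). lra.
Qed.

Theorem closed_graph : bounded_map F.
Proof.
  destruct linear_sublevel_dense as [M [HM Happ]].
  exists (2 * M). split; [lra|]. intro x.
  destruct (geometric_decomposition M Happ HM x) as [z Hz].
  exact (bound_of_decomposition M x z HM Hz).
Qed.

End ClosedGraph.

Definition linear_on {Z : Banach} (D : Z -> Prop) (f : Z -> Z) : Prop :=
  D vzero /\ (forall x y, D x -> D y -> D (vadd x y)) /\ (forall a x, D x -> D (vscal a x)) /\
  (forall x y, D x -> D y -> f (vadd x y) = vadd (f x) (f y)) /\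
  (forall a x, D x -> f (vscal a x) = vscal a (f x)).

Definition shift {Z : Banach} (f : Z -> Z) (mu : Cplx) (x : Z) : Z := vsub (f x) (vscal mu x).

Definition bounded_below {Z : Banach} (D : Z -> Prop) (f : Z -> Z) (mu : Cplx) : Prop :=
  exists c, forall x, D x -> vnorm x <= c * vnorm (shift f mu x).

Section LinOpFacts.
Context {X Y : Banach} (T : LinOp X Y).

Lemma app_vzero : app T vzero = vzero.
Proof. pose proof (app_scal _ _ T C0 vzero (dom_0 _ _ T)) as H. rewrite !vscal_C0 in H. auto. Qed.

Lemma dom_vsub x y : dom T x -> dom T y -> dom T (vsub x y).
Proof. intros. unfold vsub. apply dom_add; auto. rewrite vopp_scal. apply dom_scal; auto. Qed.

Lemma app_vsub x y : dom T x -> dom T y -> app T (vsub x y) = vsub (app T x) (app T y).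
Proof.
  intros. unfold vsub. rewrite app_add, !vopp_scal, app_scal; auto.
  rewrite vopp_scal. apply dom_scal; auto.
Qed.

End LinOpFacts.

Lemma prod_linear_on {X Y : Banach} (A : LinOp X Y) (B : LinOp Y X) :
  linear_on (prod_dom A B) (prod_app A B).
Proof.
  unfold linear_on, prod_dom, prod_app. split; [|split; [|split; [|split]]].
  - split. { apply dom_0. } rewrite app_vzero. apply dom_0.
  - intros x y [H1 H2] [H3 H4]. split. { apply dom_add; auto. }
    rewrite app_add; auto. apply dom_add; auto.
  - intros a x [H1 H2]. split. { apply dom_scal; auto. } rewrite app_scal; auto. apply dom_scal; auto.
  - intros x y [H1 H2] [H3 H4]. rewrite !app_add; auto.
  - intros a x [H1 H2]. rewrite !app_scal; auto.
Qed.

Section LinearOn.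
Context {Z : Banach} (D : Z -> Prop) (f : Z -> Z).
Hypothesis HL : linear_on D f.

Lemma linear_on_dom_vzero : D vzero. Proof. apply HL. Qed.
Lemma linear_on_dom_vadd x y : D x -> D y -> D (vadd x y). Proof. apply HL. Qed.
Lemma linear_on_dom_vscal a x : D x -> D (vscal a x). Proof. apply HL. Qed.
Lemma linear_on_dom_vsub x y : D x -> D y -> D (vsub x y).
Proof.
  intros. unfold vsub. apply linear_on_dom_vadd; auto.
  rewrite vopp_scal. apply linear_on_dom_vscal; auto.
Qed.

Lemma linear_on_vadd x y : D x -> D y -> f (vadd x y) = vadd (f x) (f y). Proof. apply HL. Qed.
Lemma linear_on_vscal a x : D x -> f (vscal a x) = vscal a (f x). Proof. apply HL. Qed.
Lemma linear_on_vsub x y : D x -> D y -> f (vsub x y) = vsub (f x) (f y).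
Proof.
  intros. unfold vsub. rewrite linear_on_vadd, !vopp_scal, linear_on_vscal; auto.
  rewrite vopp_scal. apply linear_on_dom_vscal; auto.
Qed.

Lemma linear_on_vzero : f vzero = vzero.
Proof. pose proof (linear_on_vscal C0 vzero linear_on_dom_vzero) as H. rewrite !vscal_C0 in H. auto. Qed.

Lemma shift_vadd mu x y : D x -> D y -> shift f mu (vadd x y) = vadd (shift f mu x) (shift f mu y).
Proof. intros. unfold shift. rewrite linear_on_vadd; auto. vring. Qed.

Lemma shift_vscal mu a x : D x -> shift f mu (vscal a x) = vscal a (shift f mu x).
Proof. intros. unfold shift. rewrite linear_on_vscal; auto. vring. Qed.

Lemma shift_vsub mu x y : D x -> D y -> shift f mu (vsub x y) = vsub (shift f mu x) (shift f mu y).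
Proof. intros. unfold shift. rewrite linear_on_vsub; auto. vring. Qed.

Lemma shift_vzero mu : shift f mu vzero = vzero.
Proof. unfold shift. rewrite linear_on_vzero. vring. Qed.

Lemma ran_shift_shift mu x : D x -> ran_shift D f mu (shift f mu x).
Proof. intros. exists x. split; auto. Qed.

Lemma ran_shift_vadd mu x y :
  ran_shift D f mu x -> ran_shift D f mu y -> ran_shift D f mu (vadd x y).
Proof.
  intros [u [Hu <-]] [v [Hv <-]]. exists (vadd u v).
  split; [apply linear_on_dom_vadd | apply shift_vadd]; auto.
Qed.

Lemma ran_shift_vscal mu a x : ran_shift D f mu x -> ran_shift D f mu (vscal a x).
Proof.
  intros [u [Hu <-]]. exists (vscal a u).
  split; [apply linear_on_dom_vscal | apply shift_vscal]; auto.
Qed.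

Lemma injective_shift_iff_ker mu :
  injective_shift D f mu <-> (forall x, ker_shift D f mu x -> x = vzero).
Proof.
  split.
  - intros H x [Hx E]. apply H; auto. { apply linear_on_dom_vzero. }
    change (shift f mu x = shift f mu vzero). rewrite shift_vzero. exact E.
  - intros H x1 x2 H1 H2 E. apply vsub_eq0, H. split. { apply linear_on_dom_vsub; auto. }
    change (shift f mu (vsub x1 x2) = vzero). rewrite shift_vsub; auto.
    unfold shift. rewrite E. apply vsub_diag.
Qed.

Lemma sigma_ap_not_bounded_below mu : in_sigma_ap D f mu -> ~ bounded_below D f mu.
Proof.
  intros [u [Hu1 [Hu2 Hu3]]] [c Hc].
  pose proof (Rabs_pos c). pose proof (Rle_abs c).
  destruct (Hu3 (/ (Rabs c + 1))) as [N HN]. { apply Rinv_0_lt_compat. lra. }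
  specialize (HN N (le_n _)). specialize (Hc (u N) (Hu1 N)). rewrite Hu2 in Hc.
  rewrite vsub_vzero in HN. fold (shift f mu (u N)) in HN.
  pose proof (vnorm_nonneg (shift f mu (u N))).
  assert (H3 : (Rabs c + 1) * vnorm (shift f mu (u N)) < (Rabs c + 1) * / (Rabs c + 1))
    by (apply Rmult_lt_compat_l; lra).
  rewrite Rinv_r in H3 by lra. nra.
Qed.

Lemma not_bounded_below_sigma_ap mu : ~ bounded_below D f mu -> in_sigma_ap D f mu.
Proof.
  intro H.
  assert (Hn : forall n : nat, exists x, D x /\ vnorm x > (INR n + 1) * vnorm (shift f mu x)).
  { intro n. apply NNPP. intro H1. apply H. exists (INR n + 1). intros x Hx.
    apply Rnot_lt_le. intro H2. apply H1. eauto. }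
  destruct (choice _ Hn) as [xs Hxs].
  assert (Hpos : forall n, vnorm (xs n) > 0).
  { intro n. destruct (Hxs n) as [_ H2]. pose proof (vnorm_nonneg (shift f mu (xs n))).
    pose proof (pos_INR n). nra. }
  assert (Hinv : forall n, 0 <= / vnorm (xs n)) by (intro n; left; apply Rinv_0_lt_compat, Hpos).
  exists (fun n => vscal (RtoC (/ vnorm (xs n))) (xs n)). split; [|split].
  - intro n. apply linear_on_dom_vscal, Hxs.
  - intro n. pose proof (Hpos n). rewrite vnorm_scal, Cabs_RtoC, Rabs_pos_eq by auto. field. lra.
  - apply converges_vzero_iff. intros e He. destruct (nat_archimedean (/ e)) as [N HN].
    exists N. intros n Hn'.
    change (vnorm (shift f mu (vscal (RtoC (/ vnorm (xs n))) (xs n))) < e).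
    rewrite shift_vscal by apply Hxs. rewrite vnorm_scal, Cabs_RtoC, Rabs_pos_eq by auto.
    destruct (Hxs n) as [_ H2]. specialize (Hpos n). apply le_INR in Hn'. pose proof (pos_INR N).
    set (a := vnorm (xs n)) in *. set (b := vnorm (shift f mu (xs n))) in *.
    assert (b < a / (INR n + 1)).
    { apply Rmult_lt_reg_l with (INR n + 1). { lra. } field_simplify; lra. }
    assert (a / (INR n + 1) <= a * e).
    { unfold Rdiv. apply Rmult_le_compat_l. { lra. }
      rewrite <- (Rinv_inv e). apply Rinv_le_contravar; [apply Rinv_0_lt_compat|]; lra. }
    apply Rmult_lt_reg_l with a; auto. field_simplify; lra.
Qed.

Lemma sigma_ap_iff_not_bounded_below mu : in_sigma_ap D f mu <-> ~ bounded_below D f mu.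
Proof. split; [apply sigma_ap_not_bounded_below | apply not_bounded_below_sigma_ap]. Qed.

End LinearOn.

Definition inverts_shift {Z : Banach} (D : Z -> Prop) (f : Z -> Z) (mu : Cplx) (S : Z -> Z) : Prop :=
  (forall y, D (S y) /\ shift f mu (S y) = y) /\ (forall x, D x -> S (shift f mu x) = x).

Section Resolvent.
Context {Z : Banach} (D : Z -> Prop) (f : Z -> Z) (mu : Cplx).
Hypothesis HL : linear_on D f.

Lemma inverts_shift_linear S : inverts_shift D f mu S -> linear_map S.
Proof.
  intros [H1 H2]. split.
  - intros x y. destruct (H1 x) as [Ha Hb]. destruct (H1 y) as [Hc Hd].
    rewrite <- (H2 (vadd (S x) (S y))) by (apply (linear_on_dom_vadd D f HL); auto).
    rewrite (shift_vadd D f HL), Hb, Hd; auto.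
  - intros a x. destruct (H1 x) as [Ha Hb].
    rewrite <- (H2 (vscal a (S x))) by (apply (linear_on_dom_vscal D f HL); auto).
    rewrite (shift_vscal D f HL), Hb; auto.
Qed.

Lemma resolvent_inverse :
  in_resolvent D f mu -> exists S, inverts_shift D f mu S /\ bounded_map S.
Proof.
  intros [Hinj [Hsur [c Hc]]]. destruct (choice _ Hsur) as [S HS].
  assert (H2 : forall x, D x -> S (shift f mu x) = x).
  { intros x Hx. destruct (HS (shift f mu x)) as [Ha Hb]. apply Hinj; auto. }
  exists S. split. { split; auto. }
  exists (Rmax c 0). split. { apply Rmax_r. } intro y. destruct (HS y) as [Ha Hb].
  specialize (Hc (S y) Ha). rewrite Hb in Hc.
  pose proof (vnorm_nonneg y). pose proof (Rmax_l c 0).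
  eapply Rle_trans; [apply Hc|]. apply Rmult_le_compat_r; auto.
Qed.

End Resolvent.

Lemma closed_op_resolvent_bounded {X Y : Banach} (A : LinOp X Y) (B : LinOp Y X) nu R :
  closed_op A -> inverts_shift (prod_dom B A) (prod_app B A) nu R -> bounded_map R ->
  bounded_map (fun x => app A (R x)).
Proof.
  intros hAc hR hRb. pose proof (inverts_shift_linear _ _ _ (prod_linear_on B A) R hR) as [Radd Rscal].
  assert (HRd : forall x, dom A (R x)) by (intro x; apply (proj1 hR x)).
  apply closed_graph.
  - split; intros.
    + rewrite Radd, app_add; auto.
    + rewrite Rscal, app_scal; auto.
  - intros u x y Hu Hy. apply (hAc (fun n => R (u n)) (R x) y); auto.
    apply bounded_linear_continuous; auto. split; auto.
Qed.

Definition subspace {X : Banach} (K : X -> Prop) : Prop :=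
  K vzero /\ (forall x y, K x -> K y -> K (vadd x y)) /\ (forall a x, K x -> K (vscal a x)).

Lemma linear_on_ran_shift_subspace {Z : Banach} (D : Z -> Prop) f mu :
  linear_on D f -> subspace (ran_shift D f mu).
Proof.
  intro HL. split; [|split].
  - exists vzero. split; [apply (linear_on_dom_vzero D f HL) | apply (shift_vzero D f HL)].
  - intros; apply ran_shift_vadd; auto.
  - intros; apply ran_shift_vscal; auto.
Qed.

Lemma linear_on_ker_shift_subspace {Z : Banach} (D : Z -> Prop) f mu :
  linear_on D f -> subspace (ker_shift D f mu).
Proof.
  intro HL. split; [|split].
  - split. { apply (linear_on_dom_vzero D f HL). } apply (shift_vzero D f HL).
  - intros x y [Hx Ex] [Hy Ey]. split. { apply (linear_on_dom_vadd D f HL); auto. }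
    change (shift f mu (vadd x y) = vzero). rewrite (shift_vadd D f HL); auto.
    change (shift f mu x = vzero) in Ex. change (shift f mu y = vzero) in Ey.
    rewrite Ex, Ey. apply vadd_0.
  - intros a x [Hx Ex]. split. { apply (linear_on_dom_vscal D f HL); auto. }
    change (shift f mu (vscal a x) = vzero). rewrite (shift_vscal D f HL); auto.
    change (shift f mu x = vzero) in Ex. rewrite Ex. apply vscal_vzero.
Qed.

Section Span.
Context {X : Banach}.
Implicit Types vs : list X.

Lemma in_span_nil (x : X) : in_span nil x <-> x = vzero.
Proof.
  split.
  - intros [cs [H1 H2]]. destruct cs; [exact H2 | discriminate].
  - intros ->. exists nil. auto.
Qed.

Lemma in_span_cons (v : X) vs x :
  in_span (v :: vs) x <-> exists c w, in_span vs w /\ x = vadd (vscal c v) w.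
Proof.
  split.
  - intros [cs [H1 H2]]. destruct cs as [|c cs]; simpl in *; [discriminate|].
    exists c, (lincomb (combine cs vs)). split; [exists cs; auto | exact H2].
  - intros [c [w [[cs [H1 H2]] E]]]. exists (c :: cs). simpl. subst. auto.
Qed.

Lemma in_span_vzero vs : in_span vs vzero.
Proof.
  induction vs. { apply in_span_nil; auto. }
  apply in_span_cons. exists C0, vzero. split; auto. rewrite vscal_C0, vadd_0. auto.
Qed.

Lemma in_span_vadd vs x y : in_span vs x -> in_span vs y -> in_span vs (vadd x y).
Proof.
  revert x y. induction vs; intros x y Hx Hy.
  - apply in_span_nil in Hx; apply in_span_nil in Hy; subst. apply in_span_nil. apply vadd_0.
  - apply in_span_cons in Hx as [c [w [Hw ->]]]. apply in_span_cons in Hy as [d [u [Hu ->]]].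
    apply in_span_cons. exists (Cadd c d), (vadd w u). split; [apply IHvs; auto | vring].
Qed.

Lemma in_span_vscal vs a x : in_span vs x -> in_span vs (vscal a x).
Proof.
  revert x. induction vs; intros x Hx.
  - apply in_span_nil in Hx; subst. apply in_span_nil. apply vscal_vzero.
  - apply in_span_cons in Hx as [c [w [Hw ->]]]. apply in_span_cons.
    exists (Cmul a c), (vscal a w). split; [apply IHvs; auto | vring].
Qed.

Lemma in_span_vsub vs x y : in_span vs x -> in_span vs y -> in_span vs (vsub x y).
Proof.
  intros. unfold vsub. apply in_span_vadd; auto. rewrite vopp_scal. apply in_span_vscal; auto.
Qed.

(* Exchange argument: replace one spanning vector at a time by a vector of [K]. *)
Lemma subspace_in_span_basis vs : forall K, subspace K -> (forall x, K x -> in_span vs x) ->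
  exists ks, (forall k, In k ks -> K k) /\ (forall x, K x -> in_span ks x).
Proof.
  induction vs as [|v vs IH]; intros K HK Hs.
  - exists nil. split; [intros k []|]. auto.
  - destruct (classic (forall x, K x -> in_span vs x)) as [Hall|Hn]; [apply IH; auto|].
    apply not_all_ex_not in Hn as [k Hk]. apply imply_to_and in Hk as [HKk Hnk].
    destruct (proj1 (in_span_cons v vs k) (Hs k HKk)) as [c [w [Hw Ek]]].
    assert (Hc : c <> C0). { intro E. subst. apply Hnk. rewrite vscal_C0, vadd_0_l. auto. }
    pose proof (Cnorm2_neq0 c Hc) as Hc2.
    destruct (IH (fun x => K x /\ in_span vs x)) as [ks [Hks1 Hks2]].
    { destruct HK as [H0 [H1 H2]]. split; [|split].
      - split; auto. apply in_span_vzero.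
      - intros x y [Hx1 Hx2] [Hy1 Hy2]. split; auto. apply in_span_vadd; auto.
      - intros a x [Hx1 Hx2]. split; auto. apply in_span_vscal; auto. }
    { intros x [_ Hx]; exact Hx. }
    exists (k :: ks). split.
    + intros k' [E|Hin]; [subst; auto | apply Hks1; auto].
    + intros x Hx. destruct (proj1 (in_span_cons v vs x) (Hs x Hx)) as [d [u [Hu Ex]]].
      set (e := vsub x (vscal (Cmul d (Cinv c)) k)).
      assert (He1 : K e).
      { destruct HK as [_ [H1 H2]]. unfold e, vsub. apply H1; auto.
        rewrite vopp_scal. apply H2, H2; auto. }
      assert (He2 : in_span vs e).
      { replace e with (vsub u (vscal (Cmul d (Cinv c)) w)).
        { apply in_span_vsub; auto. apply in_span_vscal; auto. }
        unfold e. rewrite Ex, Ek. vring. }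
      apply in_span_cons. exists (Cmul d (Cinv c)), e. split; [apply Hks2; auto | unfold e; vring].
Qed.

End Span.

Lemma in_span_map {X Y : Banach} (P : X -> Prop) (F : X -> Y) :
  P vzero -> (forall x y, P x -> P y -> P (vadd x y)) -> (forall a x, P x -> P (vscal a x)) ->
  (forall x y, P x -> P y -> F (vadd x y) = vadd (F x) (F y)) ->
  (forall a x, P x -> F (vscal a x) = vscal a (F x)) ->
  forall vs x, (forall v, In v vs -> P v) -> in_span vs x -> P x /\ in_span (map F vs) (F x).
Proof.
  intros H0 H1 H2 F1 F2. induction vs; intros x Hv Hx.
  - apply in_span_nil in Hx. subst. split; auto. simpl. apply in_span_nil.
    pose proof (F2 C0 vzero H0) as H. rewrite !vscal_C0 in H. auto.
  - apply in_span_cons in Hx as [c [w [Hw ->]]]. destruct (IHvs w) as [IH1 IH2]; auto.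
    { intros; apply Hv; simpl; auto. }
    assert (Pa : P a) by (apply Hv; simpl; auto).
    split; [apply H1; auto|]. simpl. apply in_span_cons. exists c, (F w). split; auto.
    rewrite F1, F2; auto.
Qed.

Lemma dense_set_seq {Z : Banach} (P : Z -> Prop) :
  is_dense_set P -> forall x, exists u, (forall n, P (u n)) /\ converges u x.
Proof.
  intros HD x.
  assert (H : forall n : nat, exists z, P z /\ vnorm (vsub x z) < / (INR n + 1)).
  { intro n. apply HD. apply Rinv_0_lt_compat. pose proof (pos_INR n); lra. }
  destruct (choice _ H) as [u Hu].
  exists u. split; [intro n; apply Hu|].
  intros e He. destruct (nat_archimedean (/ e)) as [N HN]. exists N. intros n Hn.
  destruct (Hu n) as [_ H2]. rewrite vnorm_vsub_sym. eapply Rlt_le_trans; [apply H2|].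
  apply le_INR in Hn. pose proof (pos_INR N).
  rewrite <- (Rinv_inv e). apply Rinv_le_contravar; [apply Rinv_0_lt_compat|]; lra.
Qed.

Section Adherence.
Context {Z : Banach} (P : Z -> Prop).
Hypothesis HP : subspace P.

Definition adherent (x : Z) : Prop := forall e, e > 0 -> exists z, P z /\ vnorm (vsub x z) < e.

Lemma adherent_of x : P x -> adherent x.
Proof. intros H e He. exists x. rewrite vsub_diag, vnorm_vzero. auto. Qed.

Lemma adherent_vadd x y : adherent x -> adherent y -> adherent (vadd x y).
Proof.
  intros Hx Hy e He. destruct (Hx (e/2)) as [a [Ha1 Ha2]]; [lra|].
  destruct (Hy (e/2)) as [b [Hb1 Hb2]]; [lra|].
  exists (vadd a b). split; [apply HP; auto|]. rewrite vsub_vadd_vadd.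
  pose proof (vnorm_triangle (vsub x a) (vsub y b)). lra.
Qed.

Lemma adherent_vscal a x : adherent x -> adherent (vscal a x).
Proof.
  intros Hx e He. pose proof (Cabs_nonneg a).
  destruct (Hx (e / (Cabs a + 1))) as [b [Hb1 Hb2]]. { apply Rdiv_lt_0_compat; lra. }
  exists (vscal a b). split; [apply HP; auto|]. rewrite <- vscal_vsub, vnorm_scal.
  pose proof (vnorm_nonneg (vsub x b)).
  apply Rle_lt_trans with ((Cabs a + 1) * vnorm (vsub x b)). { nra. }
  replace e with ((Cabs a + 1) * (e / (Cabs a + 1))) by (field; lra).
  apply Rmult_lt_compat_l; lra.
Qed.

Lemma adherent_vsub x y : adherent x -> adherent y -> adherent (vsub x y).
Proof. intros. unfold vsub. apply adherent_vadd; auto. rewrite vopp_scal. apply adherent_vscal; auto. Qed.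

Lemma adherent_lim (u : nat -> Z) x : (forall n, adherent (u n)) -> converges u x -> adherent x.
Proof.
  intros Hu Hc e He. destruct (Hc (e/2)) as [N HN]; [lra|].
  destruct (Hu N (e/2)) as [z [Hz1 Hz2]]; [lra|].
  exists z. split; auto. specialize (HN N (le_n _)). pose proof (vnorm_vsub_triangle x (u N) z).
  rewrite (vnorm_vsub_sym x (u N)) in H. lra.
Qed.

End Adherence.

(** * Transfer between [AB - lam] and [BA - lam] *)

Section Intertwining.
Context {X Y : Banach} (A : LinOp X Y) (B : LinOp Y X) (lam : Cplx).
Hypothesis hlam : lam <> C0.

Local Notation DAB := (prod_dom A B).
Local Notation fAB := (prod_app A B).
Local Notation DBA := (prod_dom B A).
Local Notation fBA := (prod_app B A).

Lemma ker_shift_app y : ker_shift DAB fAB lam y -> ker_shift DBA fBA lam (app B y).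
Proof.
  intros [[Hy1 Hy2] E]. apply vsub_eq0 in E. unfold fAB, prod_app in E.
  split; [split; auto; rewrite E; apply dom_scal; auto|].
  unfold fBA, prod_app. rewrite E, app_scal; auto. apply vsub_diag.
Qed.

Lemma app_ran_shift x : ran_shift DBA fBA lam x -> dom A x -> ran_shift DAB fAB lam (app A x).
Proof.
  intros [u [[Hu1 Hu2] Eu]] Hx. unfold fBA, prod_app in Eu.
  assert (E : app B (app A u) = vadd x (vscal lam u)) by (rewrite <- Eu; vring).
  exists (app A u). split.
  - split; auto. rewrite E. apply dom_add; auto. apply dom_scal; auto.
  - unfold fAB, prod_app. rewrite E, app_add, app_scal; auto. { vring. } apply dom_scal; auto.
Qed.

(* The preimage is [lam^-1 (B w - x)] where [(AB - lam) w = A x]. *)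
Lemma ran_shift_of_app x : dom A x -> ran_shift DAB fAB lam (app A x) -> ran_shift DBA fBA lam x.
Proof.
  intros Hx [w [[Hw1 Hw2] Ew]]. unfold fAB, prod_app in Ew.
  pose proof (Cnorm2_neq0 lam hlam).
  set (u := vscal (Cinv lam) (vsub (app B w) x)).
  assert (Hu : dom A u) by (apply dom_scal, dom_vsub; auto).
  assert (Au : app A u = w).
  { unfold u. rewrite app_scal, app_vsub; auto. { rewrite <- Ew. vring. } apply dom_vsub; auto. }
  exists u. split; [split; auto; rewrite Au; auto|].
  unfold fBA, prod_app. rewrite Au. unfold u. vring.
Qed.

Lemma ker_shift_finite_dim_transfer :
  finite_dim_set (ker_shift DBA fBA lam) -> finite_dim_set (ker_shift DAB fAB lam).
Proof.
  intros [vs Hvs].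
  destruct (subspace_in_span_basis vs _
              (linear_on_ker_shift_subspace _ _ lam (prod_linear_on B A)) Hvs) as [ks [Hks1 Hks2]].
  exists (map (app A) ks). intros y Hy.
  assert (E : app A (app B y) = vscal lam y) by (destruct Hy as [_ E]; apply vsub_eq0 in E; exact E).
  destruct (in_span_map (dom A) (app A) (dom_0 _ _ A) (dom_add _ _ A) (dom_scal _ _ A)
              (app_add _ _ A) (app_scal _ _ A) ks (app B y)) as [_ H].
  { intros v Hv. apply Hks1 in Hv. destruct Hv as [[Hv _] _]. exact Hv. }
  { apply Hks2, ker_shift_app, Hy. }
  rewrite E in H. rewrite <- (vscal_Cinv_l lam y hlam). apply in_span_vscal, H.
Qed.

Lemma injective_shift_transfer :
  injective_shift DBA fBA lam -> injective_shift DAB fAB lam.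
Proof.
  intros H. apply (injective_shift_iff_ker _ _ (prod_linear_on A B)). intros y Hy.
  pose proof (proj1 (injective_shift_iff_ker _ _ (prod_linear_on B A) lam) H) as Hker.
  assert (E : app A (app B y) = vscal lam y) by (destruct Hy as [_ E]; apply vsub_eq0 in E; exact E).
  rewrite (Hker _ (ker_shift_app y Hy)), app_vzero in E.
  rewrite <- (vscal_Cinv_l lam y hlam), <- E. apply vscal_vzero.
Qed.

End Intertwining.

Section ResolventTransfer.
Context {X Y : Banach} (A : LinOp X Y) (B : LinOp Y X) (lam nu : Cplx) (R : X -> X).
Hypothesis hR : inverts_shift (prod_dom B A) (prod_app B A) nu R.

Local Notation DBA := (prod_dom B A).
Local Notation fBA := (prod_app B A).
Local Notation DAB := (prod_dom A B).
Local Notation fAB := (prod_app A B).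
Local Notation HBA := (prod_linear_on B A).

Lemma resolvent_dom x : DBA (R x).
Proof. apply (proj1 hR x). Qed.

Lemma resolvent_prod_app x : fBA (R x) = vadd x (vscal nu (R x)).
Proof. rewrite <- (proj2 (proj1 hR x)) at 2. unfold shift. vring. Qed.

Lemma resolvent_shift_comm u : DBA u -> R (shift fBA lam u) = shift fBA lam (R u).
Proof.
  intro Hu. set (v := R u). assert (Hv : DBA v) by apply resolvent_dom.
  set (s := vadd u (vscal (Cadd nu (Copp lam)) v)).
  assert (E1 : shift fBA lam v = s).
  { unfold shift, v. rewrite resolvent_prod_app. fold v. unfold s. vring. }
  assert (Hs : DBA s) by (apply (linear_on_dom_vadd _ _ HBA); [|apply (linear_on_dom_vscal _ _ HBA)]; auto).
  rewrite E1, <- (proj2 hR s Hs). f_equal.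
  unfold s. rewrite (shift_vadd _ _ HBA), (shift_vscal _ _ HBA); auto.
  2: apply (linear_on_dom_vscal _ _ HBA); auto.
  unfold v. rewrite (proj2 (proj1 hR u)). unfold shift. vring.
Qed.

Lemma resolvent_preserves_ran x : ran_shift DBA fBA lam x -> ran_shift DBA fBA lam (R x).
Proof.
  intros [u [Hu <-]]. exists (R u). split; [apply resolvent_dom|].
  symmetry. apply (resolvent_shift_comm u Hu).
Qed.

Lemma resolvent_app_linear : linear_map (fun x => app A (R x)).
Proof.
  destruct (inverts_shift_linear _ _ _ HBA R hR) as [Radd Rscal].
  split; intros.
  - rewrite Radd, app_add; auto; apply resolvent_dom.
  - rewrite Rscal, app_scal; auto; apply resolvent_dom.
Qed.

Hypothesis hlam : lam <> C0.

(* [x = (BA - lam) R x + (lam - nu) R x] *)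
Lemma ran_shift_iff_app_resolvent x :
  ran_shift DBA fBA lam x <-> ran_shift DAB fAB lam (app A (R x)).
Proof.
  split.
  - intro H. apply app_ran_shift; [apply resolvent_preserves_ran, H | apply resolvent_dom].
  - intro H. apply ran_shift_of_app in H; auto; [|apply resolvent_dom].
    assert (E : x = vadd (shift fBA lam (R x)) (vscal (Cadd lam (Copp nu)) (R x))).
    { unfold shift. rewrite resolvent_prod_app. vring. }
    rewrite E. apply (ran_shift_vadd _ _ HBA).
    + apply ran_shift_shift, resolvent_dom.
    + apply (ran_shift_vscal _ _ HBA), H.
Qed.

Lemma surjective_shift_transfer :
  (forall y, ran_shift DAB fAB lam y) -> forall x, ran_shift DBA fBA lam x.
Proof. intros H x. apply ran_shift_iff_app_resolvent, H. Qed.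

Hypothesis hARb : bounded_map (fun x => app A (R x)).

Lemma ran_closed_transfer :
  is_closed_set (ran_shift DAB fAB lam) -> is_closed_set (ran_shift DBA fBA lam).
Proof.
  intros HC u l Hu Hl. apply ran_shift_iff_app_resolvent.
  apply (HC (fun n => app A (R (u n)))).
  - intro n. apply ran_shift_iff_app_resolvent, Hu.
  - apply (bounded_linear_continuous (fun x => app A (R x))); auto.
    apply resolvent_app_linear.
Qed.

(* [A x = A R ((BA - nu) x)] with [(BA - nu) x = (BA - lam) x + (lam - nu) x]. *)
Lemma app_bounded_by_shift : bounded_below DBA fBA lam ->
  exists a, 0 <= a /\ forall x, DBA x -> vnorm (app A x) <= a * vnorm (shift fBA lam x).
Proof.
  intros [c0 Hc0]. destruct hARb as [g [Hg HAR]].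
  set (c := Rmax c0 0). set (L := Cabs (Cadd lam (Copp nu))).
  assert (Hc : 0 <= c) by apply Rmax_r. assert (HL : 0 <= L) by apply Cabs_nonneg.
  exists (g * (1 + L * c)). split; [apply Rmult_le_pos; nra|]. intros x Hx.
  assert (Hxc : vnorm x <= c * vnorm (shift fBA lam x)).
  { eapply Rle_trans; [apply Hc0; auto|].
    apply Rmult_le_compat_r; [apply vnorm_nonneg | apply Rmax_l]. }
  replace (app A x) with (app A (R (shift fBA nu x))) by now rewrite (proj2 hR x Hx).
  replace (shift fBA nu x) with (vadd (shift fBA lam x) (vscal (Cadd lam (Copp nu)) x))
    by (unfold shift; vring).
  eapply Rle_trans; [apply HAR|]. rewrite Rmult_assoc. apply Rmult_le_compat_l; auto.
  eapply Rle_trans; [apply vnorm_triangle|]. rewrite vnorm_scal. fold L.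
  pose proof (vnorm_nonneg (shift fBA lam x)). nra.
Qed.

End ResolventTransfer.

Section TwoResolvents.
Context {X Y : Banach} (A : LinOp X Y) (B : LinOp Y X) (lam nu mu : Cplx).
Context (R : X -> X) (Q : Y -> Y).
Hypothesis hlam : lam <> C0.
Hypothesis hR : inverts_shift (prod_dom B A) (prod_app B A) nu R.
Hypothesis hQ : inverts_shift (prod_dom A B) (prod_app A B) mu Q.

Local Notation DAB := (prod_dom A B).
Local Notation fAB := (prod_app A B).
Local Notation DBA := (prod_dom B A).
Local Notation fBA := (prod_app B A).

(* [B Q] maps a dense subset into [ran (BA - lam)]; so does [B = B Q (AB - mu)]
   on [A R (dom A)], which yields [(I + nu R) x], and then
   [x = (BA - lam) R x + (lam - nu) R x] with [lam R x = (I + nu R) x - (BA - lam) R x]. *)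
Lemma ran_dense_transfer : densely_defined A -> bounded_map R ->
  bounded_map (fun y => app B (Q y)) ->
  is_dense_set (ran_shift DAB fAB lam) -> is_dense_set (ran_shift DBA fBA lam).
Proof.
  intros hAd hRb hBQb HD. set (P := ran_shift DBA fBA lam).
  assert (HP : subspace P) by apply linear_on_ran_shift_subspace, prod_linear_on.
  assert (HBQ : forall y, adherent P (app B (Q y))).
  { intro y. destruct (dense_set_seq _ HD y) as [z [Hz Hzc]].
    apply (adherent_lim P (fun n => app B (Q (z n)))).
    - intro n. apply adherent_of, (app_ran_shift B A lam).
      + apply (resolvent_preserves_ran B A lam mu Q hQ), Hz.
      + apply (resolvent_dom B A mu Q hQ).
    - apply (bounded_linear_continuous (fun y => app B (Q y))); auto.
      apply (resolvent_app_linear B A mu Q hQ). }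
  assert (Hnear : forall x, adherent P (vadd x (vscal nu (R x)))).
  { intro x. destruct (dense_set_seq _ hAd x) as [xk [Hxk Hxc]].
    apply (adherent_lim P (fun k => vadd (xk k) (vscal nu (R (xk k))))).
    - intro k. set (w := app A (R (xk k))).
      assert (Ew : app B w = vadd (xk k) (vscal nu (R (xk k))))
        by apply (resolvent_prod_app A B nu R hR).
      assert (Hw : DAB w).
      { split; [apply (resolvent_dom A B nu R hR)|]. rewrite Ew.
        apply dom_add; auto. apply dom_scal, (resolvent_dom A B nu R hR). }
      rewrite <- Ew, <- (proj2 hQ w Hw). apply HBQ.
    - apply converges_vadd; auto. apply converges_vscal.
      apply bounded_linear_continuous; auto.
      apply (inverts_shift_linear _ _ _ (prod_linear_on B A) R hR). }
  assert (Hall : forall x, adherent P x).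
  { intro x. pose proof (Cnorm2_neq0 lam hlam).
    pose proof (resolvent_prod_app A B nu R hR x) as E.
    assert (HS : adherent P (shift fBA lam (R x)))
      by apply adherent_of, ran_shift_shift, (resolvent_dom A B nu R hR).
    assert (HRx : adherent P (R x)).
    { replace (R x) with
        (vscal (Cinv lam) (vsub (vadd x (vscal nu (R x))) (shift fBA lam (R x))))
        by (unfold shift; rewrite E; vring).
      apply adherent_vscal, adherent_vsub; auto. }
    replace x with (vadd (shift fBA lam (R x)) (vscal (Cadd lam (Copp nu)) (R x)))
      by (unfold shift; rewrite E; vring).
    apply adherent_vadd, adherent_vscal; auto. }
  intros x. apply Hall.
Qed.

(* A complement of [ran (AB - lam)] spanned by [vs] is sent by [B Q] to a
   complement of [ran (BA - lam)]. *)
Lemma ran_finite_codim_transfer :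
  finite_codim_set (ran_shift DAB fAB lam) -> finite_codim_set (ran_shift DBA fBA lam).
Proof.
  intros [vs Hvs]. exists (map (fun v => app B (Q v)) vs). intro x.
  pose proof (Cnorm2_neq0 lam hlam).
  destruct (Hvs (app A (R x))) as [m [u [Hm [Hu E]]]].
  set (q := Q u). set (p := app B q). set (k := Cmul (Cadd lam (Copp mu)) (Cinv lam)).
  assert (Hq : DAB q) by apply (resolvent_dom B A mu Q hQ).
  assert (Eq : fAB q = vadd u (vscal mu q)) by apply (resolvent_prod_app B A mu Q hQ).
  assert (Hp : in_span (map (fun v => app B (Q v)) vs) p).
  { destruct (in_span_map (fun _ => True) (fun v => app B (Q v))) with (vs := vs) (x := u)
      as [_ Hspan]; auto; intros; apply (resolvent_app_linear B A mu Q hQ). }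
  set (v := R x). assert (Hv : DBA v) by apply (resolvent_dom A B nu R hR).
  assert (Hrest : ran_shift DBA fBA lam (vsub v (vscal k p))).
  { apply (ran_shift_of_app A B lam hlam).
    { apply dom_vsub; [apply Hv | apply dom_scal, Hq]. }
    rewrite app_vsub, app_scal; [| apply Hq | apply Hv | apply dom_scal, Hq].
    change (app A p) with (fAB q). unfold v. rewrite E, Eq.
    replace (vsub (vadd m u) (vscal k (vadd u (vscal mu q))))
      with (vadd m (shift fAB lam (vscal (Cmul mu (Cinv lam)) q))).
    { apply (ran_shift_vadd _ _ (prod_linear_on A B)); auto.
      apply ran_shift_shift, (linear_on_dom_vscal _ _ (prod_linear_on A B)); auto. }
    unfold shift. rewrite (linear_on_vscal _ _ (prod_linear_on A B)), Eq; auto.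
    unfold k. vring. }
  exists (vadd (shift fBA lam v) (vscal (Cadd lam (Copp nu)) (vsub v (vscal k p)))),
         (vscal (Cmul (Cadd lam (Copp nu)) k) p).
  split; [|split].
  - apply (ran_shift_vadd _ _ (prod_linear_on B A)); [apply ran_shift_shift; auto|].
    apply (ran_shift_vscal _ _ (prod_linear_on B A)); auto.
  - apply in_span_vscal; auto.
  - unfold shift, v. rewrite (resolvent_prod_app A B nu R hR). vring.
Qed.

(* For [y] in [dom (AB)] put [y' = Q y] and [x = B y']: then
   [(BA - lam) x = B Q (AB - lam) y], [lam y' = A x - (AB - lam) y'] and
   [y = A x - mu y']. *)
Lemma bounded_below_transfer : bounded_map (fun x => app A (R x)) -> bounded_map Q ->
  bounded_map (fun y => app B (Q y)) ->
  bounded_below DBA fBA lam -> bounded_below DAB fAB lam.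
Proof.
  intros hARb [qc [Hqc HQ]] [h [Hh HBQ]] Hbb.
  destruct (app_bounded_by_shift A B lam nu R hR hARb Hbb) as [a [Ha HA]].
  set (I := Cabs (Cinv lam)). set (M := Cabs mu).
  assert (HI : 0 <= I) by apply Cabs_nonneg. assert (HM : 0 <= M) by apply Cabs_nonneg.
  exists (a * h + M * I * (a * h + qc)). intros y Hy.
  set (y' := Q y). assert (Hy' : DAB y') by apply (resolvent_dom B A mu Q hQ).
  assert (Ey' : fAB y' = vadd y (vscal mu y')) by apply (resolvent_prod_app B A mu Q hQ).
  set (x := app B y').
  assert (Hx : DBA x).
  { split; [apply Hy'|]. change (app A x) with (fAB y'). rewrite Ey'.
    apply dom_add; [apply Hy | apply dom_scal, Hy']. }
  assert (ETy' : shift fAB lam y' = Q (shift fAB lam y))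
    by (symmetry; apply (resolvent_shift_comm B A lam mu Q hQ y Hy)).
  assert (ESx : shift fBA lam x = app B (shift fAB lam y')).
  { unfold shift, fAB, fBA, prod_app, x. rewrite app_vsub, app_scal; auto.
    - apply Hy'.
    - apply Hx.
    - apply dom_scal, Hy'. }
  set (t := vnorm (shift fAB lam y)). assert (Ht : 0 <= t) by apply vnorm_nonneg.
  assert (BAx : vnorm (app A x) <= a * h * t).
  { eapply Rle_trans; [apply HA; auto|]. rewrite Rmult_assoc. apply Rmult_le_compat_l; auto.
    rewrite ESx, ETy'. apply HBQ. }
  assert (By' : vnorm y' <= I * (a * h * t + qc * t)).
  { replace y' with (vscal (Cinv lam) (vsub (app A x) (shift fAB lam y')))
      by (pose proof (Cnorm2_neq0 lam hlam); unfold shift, x, fAB, prod_app; vring).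
    rewrite vnorm_scal. apply Rmult_le_compat_l; auto.
    eapply Rle_trans; [apply vnorm_vsub_le|]. rewrite ETy'. specialize (HQ (shift fAB lam y)). fold t in HQ. lra. }
  assert (By : vnorm y <= vnorm (app A x) + M * vnorm y').
  { replace y with (vsub (app A x) (vscal mu y'))
      by (change (app A x) with (fAB y'); rewrite Ey'; vring).
    eapply Rle_trans; [apply vnorm_vsub_le|]. rewrite vnorm_scal. fold M. lra. }
  assert (M * vnorm y' <= M * (I * (a * h * t + qc * t))) by (apply Rmult_le_compat_l; auto).
  fold t. nra.
Qed.

End TwoResolvents.

Lemma exists_bounded_resolvent {X Y : Banach} (A : LinOp X Y) (B : LinOp Y X) :
  closed_op A -> (exists nu, in_resolvent (prod_dom B A) (prod_app B A) nu) ->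
  exists nu R, inverts_shift (prod_dom B A) (prod_app B A) nu R /\ bounded_map R /\
    bounded_map (fun x => app A (R x)).
Proof.
  intros hAc [nu Hnu]. destruct (resolvent_inverse _ _ _ Hnu) as [R [hR hRb]].
  exists nu, R. split; [|split]; auto. apply (closed_op_resolvent_bounded A B nu R); auto.
Qed.

Section ProductSpectra.
Context {X Y : Banach} (A : LinOp X Y) (B : LinOp Y X).
Hypothesis hAc : closed_op A.
Hypothesis hBc : closed_op B.
Hypothesis hAB : exists mu, in_resolvent (prod_dom A B) (prod_app A B) mu.
Hypothesis hBA : exists nu, in_resolvent (prod_dom B A) (prod_app B A) nu.
Variable lam : Cplx.
Hypothesis hlam : lam <> C0.

Local Notation DAB := (prod_dom A B).
Local Notation fAB := (prod_app A B).
Local Notation DBA := (prod_dom B A).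
Local Notation fBA := (prod_app B A).

Lemma ran_closed_iff :
  is_closed_set (ran_shift DAB fAB lam) <-> is_closed_set (ran_shift DBA fBA lam).
Proof.
  destruct (exists_bounded_resolvent A B hAc hBA) as [nu [R [hR [_ hARb]]]].
  destruct (exists_bounded_resolvent B A hBc hAB) as [mu [Q [hQ [_ hBQb]]]].
  split; [apply (ran_closed_transfer A B lam nu R) | apply (ran_closed_transfer B A lam mu Q)]; auto.
Qed.

Lemma ran_dense_iff : densely_defined A -> densely_defined B ->
  is_dense_set (ran_shift DAB fAB lam) <-> is_dense_set (ran_shift DBA fBA lam).
Proof.
  intros hAd hBd.
  destruct (exists_bounded_resolvent A B hAc hBA) as [nu [R [hR [hRb hARb]]]].
  destruct (exists_bounded_resolvent B A hBc hAB) as [mu [Q [hQ [hQb hBQb]]]].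
  split; [apply (ran_dense_transfer A B lam nu mu R Q) | apply (ran_dense_transfer B A lam mu nu Q R)];
    auto.
Qed.

Lemma ker_finite_dim_iff :
  finite_dim_set (ker_shift DAB fAB lam) <-> finite_dim_set (ker_shift DBA fBA lam).
Proof. split; apply ker_shift_finite_dim_transfer; auto. Qed.

Lemma ran_finite_codim_iff :
  finite_codim_set (ran_shift DAB fAB lam) <-> finite_codim_set (ran_shift DBA fBA lam).
Proof.
  destruct (exists_bounded_resolvent A B hAc hBA) as [nu [R [hR _]]].
  destruct (exists_bounded_resolvent B A hBc hAB) as [mu [Q [hQ _]]].
  split; [apply (ran_finite_codim_transfer A B lam nu mu R Q)
         | apply (ran_finite_codim_transfer B A lam mu nu Q R)]; auto.
Qed.

Lemma injective_shift_prod_iff :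
  injective_shift DAB fAB lam <-> injective_shift DBA fBA lam.
Proof. split; apply injective_shift_transfer; auto. Qed.

Lemma bounded_below_iff : bounded_below DAB fAB lam <-> bounded_below DBA fBA lam.
Proof.
  destruct (exists_bounded_resolvent A B hAc hBA) as [nu [R [hR [hRb hARb]]]].
  destruct (exists_bounded_resolvent B A hBc hAB) as [mu [Q [hQ [hQb hBQb]]]].
  split; [apply (bounded_below_transfer B A lam mu nu Q R) | apply (bounded_below_transfer A B lam nu mu R Q)];
    auto.
Qed.

Lemma in_resolvent_iff : in_resolvent DAB fAB lam <-> in_resolvent DBA fBA lam.
Proof.
  destruct (exists_bounded_resolvent A B hAc hBA) as [nu [R [hR _]]].
  destruct (exists_bounded_resolvent B A hBc hAB) as [mu [Q [hQ _]]].
  pose proof injective_shift_prod_iff. pose proof bounded_below_iff.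
  pose proof (surjective_shift_transfer A B lam nu R hR hlam).
  pose proof (surjective_shift_transfer B A lam mu Q hQ hlam).
  unfold in_resolvent, bounded_below, shift in *. tauto.
Qed.

End ProductSpectra.

Theorem theorem1p5 (X Y : Banach) (A : LinOp X Y) (B : LinOp Y X)
  (hAc : closed_op A) (hAd : densely_defined A)
  (hBc : closed_op B) (hBd : densely_defined B)
  (hAB : exists mu, in_resolvent (prod_dom A B) (prod_app A B) mu)
  (hBA : exists mu, in_resolvent (prod_dom B A) (prod_app B A) mu) :
  forall lam : Cplx, lam <> C0 ->
    let DAB := prod_dom A B in let fAB := prod_app A B in
    let DBA := prod_dom B A in let fBA := prod_app B A in
    (is_closed_set (ran_shift DAB fAB lam) <-> is_closed_set (ran_shift DBA fBA lam)) /\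
    (is_dense_set (ran_shift DAB fAB lam) <-> is_dense_set (ran_shift DBA fBA lam)) /\
    (upper_semi_fredholm DAB fAB lam <-> upper_semi_fredholm DBA fBA lam) /\
    (lower_semi_fredholm DAB fAB lam <-> lower_semi_fredholm DBA fBA lam) /\
    (in_sigma_ap DAB fAB lam <-> in_sigma_ap DBA fBA lam) /\
    (in_sigma_c DAB fAB lam <-> in_sigma_c DBA fBA lam) /\
    (in_sigma_r DAB fAB lam <-> in_sigma_r DBA fBA lam) /\
    (in_sigma_ess DAB fAB lam <-> in_sigma_ess DBA fBA lam).
Proof.
  intros lam hlam. cbv zeta.
  pose proof (ran_closed_iff A B hAc hBc hAB hBA lam hlam).
  pose proof (ran_dense_iff A B hAc hBc hAB hBA lam hlam hAd hBd).
  pose proof (ker_finite_dim_iff A B lam hlam).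
  pose proof (ran_finite_codim_iff A B hAc hBc hAB hBA lam hlam).
  pose proof (injective_shift_prod_iff A B lam hlam).
  pose proof (bounded_below_iff A B hAc hBc hAB hBA lam hlam).
  pose proof (in_resolvent_iff A B hAc hBc hAB hBA lam hlam).
  rewrite !sigma_ap_iff_not_bounded_below by apply prod_linear_on.
  unfold in_sigma_c, in_sigma_r, in_sigma_ess, fredholm, in_spectrum,
    upper_semi_fredholm, lower_semi_fredholm.
  tauto.
Qed.
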